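(* A collective choice problem $\mathcal C$ is Finitely Approximable if and only if it satisfies Thin Individual Indifference.
   Context: Collective choice problem $\mathcal C$: players $i\in N\cup\{A\}$ (voters $N$ and agenda setter $A$) with complete, transitive, continuous preferences $\succsim_i$ on a compact metrizable policy space $X$ with metric $d$. $d(x,B)=\inf_{y\in B}d(x,y)$. A generic $\epsilon$-grid is a finite set $X_\epsilon\subseteq X$ with $\max_{x\in X}d(x,X_\epsilon)<\epsilon$ such that every player's preference is antisymmetric on $X_\epsilon$. $\mathcal C$ is Finitely Approximable if for every $x\in X$ and $\epsilon>0$ there is a generic $\epsilon$-grid containing $x$. With $I_i(x)=\{y\in X: y\sim_i x\}$, $\mathcal C$ satisfies Thin Individual Indifference if $I_i(x)\setminus\{x\}$ has empty interior for every player $i$ and every $x\in X$. *)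

From Stdlib Require Import Reals List.
Open Scope R_scope.

Definition is_metric {X : Type} (d : X -> X -> R) : Prop :=
  (forall x y, 0 <= d x y) /\
  (forall x y, d x y = 0 <-> x = y) /\
  (forall x y, d x y = d y x) /\
  (forall x y z, d x z <= d x y + d y z).

Definition ball {X : Type} (d : X -> X -> R) (x : X) (r : R) : X -> Prop :=
  fun y => d x y < r.

Definition open_set {X : Type} (d : X -> X -> R) (U : X -> Prop) : Prop :=
  forall x, U x -> exists r, 0 < r /\ forall y, ball d x r y -> U y.

Definition closed_set {X : Type} (d : X -> X -> R) (F : X -> Prop) : Prop :=
  open_set d (fun x => ~ F x).

Definition interior {X : Type} (d : X -> X -> R) (S : X -> Prop) : X -> Prop :=
  fun y => exists U, open_set d U /\ U y /\ forall z, U z -> S z.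

Definition compact_space {X : Type} (d : X -> X -> R) : Prop :=
  forall (J : Type) (U : J -> X -> Prop),
    (forall j, open_set d (U j)) ->
    (forall x, exists j, U j x) ->
    exists js : list J, forall x, exists j, In j js /\ U j x.

(** Weak preference relations: [pref x y] means x ≿ y *)
Definition complete_pref {X : Type} (pref : X -> X -> Prop) : Prop :=
  forall x y, pref x y \/ pref y x.

Definition transitive_pref {X : Type} (pref : X -> X -> Prop) : Prop :=
  forall x y z, pref x y -> pref y z -> pref x z.

Definition continuous_pref {X : Type} (d : X -> X -> R) (pref : X -> X -> Prop) : Prop :=
  forall x, closed_set d (fun y => pref y x) /\ closed_set d (fun y => pref x y).

Definition indiff {X : Type} (pref : X -> X -> Prop) (x : X) : X -> Prop :=
  fun y => pref y x /\ pref x y.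

(** Collective choice problem: voters N (a finite set), agenda setter A.
    Players are [option N]: [Some v] is voter v, [None] is the agenda setter A. *)
Definition collective_choice_problem {N : Type} {X : Type}
    (d : X -> X -> R) (pref : option N -> X -> X -> Prop) : Prop :=
  is_metric d /\ compact_space d /\
  forall i, complete_pref (pref i) /\ transitive_pref (pref i) /\
            continuous_pref d (pref i).

(** max_{x in X} d(x, G) < eps, for a finite set G (a list):
    there is a bound M < eps with d(x,G) <= M for all x. *)
Definition grid_fine {X : Type} (d : X -> X -> R) (G : list X) (eps : R) : Prop :=
  exists M, M < eps /\ forall x, exists y, In y G /\ d x y <= M.

Definition generic_on {N X : Type} (pref : option N -> X -> X -> Prop) (G : list X) : Prop :=
  forall i x y, In x G -> In y G -> pref i x y -> pref i y x -> x = y.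

Definition generic_grid {N X : Type} (d : X -> X -> R)
    (pref : option N -> X -> X -> Prop) (G : list X) (eps : R) : Prop :=
  grid_fine d G eps /\ generic_on pref G.

Definition finitely_approximable {N X : Type} (d : X -> X -> R)
    (pref : option N -> X -> X -> Prop) : Prop :=
  forall x eps, 0 < eps -> exists G, generic_grid d pref G eps /\ In x G.

Definition thin_individual_indifference {N X : Type} (d : X -> X -> R)
    (pref : option N -> X -> X -> Prop) : Prop :=
  forall i x y, ~ interior d (fun z => indiff (pref i) x z /\ z <> x) y.

From Stdlib Require Import Reals List Lra Classical.
Open Scope R_scope.

(* Necessity: if some indifference set [I(x) \ {x}] had interior, a generic
   grid through [x] fine enough to meet that interior would contain a second
   point indifferent to [x].  Sufficiency: cover [X] by finitely many small
   balls (compactness) and pick grid points one ball at a time.  The new point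
   must avoid the indifference sets of the finitely many (player, old point)
   pairs; each of them is closed by continuity, and by thinness it cannot
   contain a whole nonempty open set except possibly the singleton of the old
   point, so successive shrinking of the ball leaves a valid choice. *)

Section Metric.

Variables (X : Type) (d : X -> X -> R).
Hypothesis d_metric : is_metric d.

Lemma ball_center (x : X) (r : R) : 0 < r -> ball d x r x.
Proof.
  destruct d_metric as [_ [d_eq0 _]].
  unfold ball; rewrite (proj2 (d_eq0 x x) eq_refl); trivial.
Qed.

Lemma open_set_inter (U V : X -> Prop) :
  open_set d U -> open_set d V -> open_set d (fun x => U x /\ V x).
Proof.
  intros HU HV x [Ux Vx].
  destruct (HU x Ux) as [r1 [Hr1 H1]], (HV x Vx) as [r2 [Hr2 H2]].
  exists (Rmin r1 r2); split; [now apply Rmin_pos|].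
  intros y Hy; unfold ball in *; split.
  - apply H1; unfold ball; eapply Rlt_le_trans; [exact Hy | apply Rmin_l].
  - apply H2; unfold ball; eapply Rlt_le_trans; [exact Hy | apply Rmin_r].
Qed.

Lemma open_set_ball (x : X) (r : R) : open_set d (ball d x r).
Proof.
  destruct d_metric as [_ [_ [_ d_tri]]].
  intros y Hy; unfold ball in *.
  exists (r - d x y); split; [lra|].
  intros z Hz; unfold ball in Hz; pose proof (d_tri x y z); lra.
Qed.

Lemma open_set_neq (g : X) : open_set d (fun y => y <> g).
Proof.
  destruct d_metric as [d_ge0 [d_eq0 [d_sym _]]].
  intros y Hy; exists (d g y); split.
  - destruct (Rle_lt_or_eq_dec 0 (d g y) (d_ge0 g y)) as [H | H]; [exact H|].
    exfalso; apply Hy; symmetry; now apply d_eq0.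
  - intros z Hz ->; unfold ball in Hz; rewrite d_sym in Hz; lra.
Qed.

Lemma compact_finite_net (r : R) : compact_space d -> 0 < r ->
  exists cs : list X, forall y, exists c, In c cs /\ d c y < r.
Proof.
  intros Hcomp Hr.
  destruct (Hcomp X (fun c => ball d c r) (fun c => open_set_ball c r)) as [cs Hcs].
  - intros y; exists y; now apply ball_center.
  - now exists cs.
Qed.

Section Preference.

Variable P : X -> X -> Prop.
Hypothesis P_continuous : continuous_pref d P.

Lemma open_set_not_indiff (g : X) : open_set d (fun z => ~ indiff P g z).
Proof.
  intros z Hz; apply not_and_or in Hz; destruct (P_continuous g) as [Hle Hge].
  destruct Hz as [Hz | Hz].
  - destruct (Hle z Hz) as [r [Hr Hball]].
    exists r; split; [exact Hr|]; intros y Hy [Hyg _]; exact (Hball y Hy Hyg).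
  - destruct (Hge z Hz) as [r [Hr Hball]].
    exists r; split; [exact Hr|]; intros y Hy [_ Hgy]; exact (Hball y Hy Hgy).
Qed.

Variable g : X.
Hypothesis P_thin_at_g : forall y, ~ interior d (fun z => indiff P g z /\ z <> g) y.

Lemma open_subset_indiff_thin (V : X -> Prop) :
  open_set d V -> (forall z, V z -> indiff P g z) -> forall z, V z -> z = g.
Proof.
  intros HV HVg z Vz; apply NNPP; intros Hzg.
  apply (P_thin_at_g z); exists (fun y => V y /\ y <> g); split; [|split].
  - apply open_set_inter; [exact HV | apply open_set_neq].
  - now split.
  - intros y [Vy Hy]; split; [exact (HVg y Vy) | exact Hy].
Qed.

Lemma open_shrink_avoid_indiff (V : X -> Prop) : open_set d V -> (exists w, V w) ->
  exists W, open_set d W /\ (exists w, W w) /\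
    forall z, W z -> V z /\ (indiff P g z -> z = g).
Proof.
  intros HV [w Vw].
  destruct (classic (exists w', V w' /\ ~ indiff P g w')) as [[w' Hw'] | Hnone].
  - exists (fun z => V z /\ ~ indiff P g z); split; [|split].
    + apply open_set_inter; [exact HV | apply open_set_not_indiff].
    + now exists w'.
    + intros z [Vz Hz]; split; [exact Vz | intros Hzg; contradiction].
  - assert (HVg : forall z, V z -> z = g).
    { apply open_subset_indiff_thin; [exact HV|].
      intros z Vz; apply NNPP; intros Hz; apply Hnone; now exists z. }
    exists V; split; [exact HV | split; [now exists w |]].
    intros z Vz; split; [exact Vz | intros _; now apply HVg].
Qed.

End Preference.

Lemma open_exists_avoid_indiff (L : list ((X -> X -> Prop) * X)) :
  (forall P g, In (P, g) L -> continuous_pref d P /\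
     forall y, ~ interior d (fun z => indiff P g z /\ z <> g) y) ->
  forall V, open_set d V -> (exists w, V w) ->
  exists z, V z /\ forall P g, In (P, g) L -> indiff P g z -> z = g.
Proof.
  induction L as [| [P g] L IH]; intros HL V HV [w Vw].
  - exists w; split; [exact Vw | now intros P g []].
  - destruct (HL P g (or_introl eq_refl)) as [Pcont Pthin].
    destruct (open_shrink_avoid_indiff P Pcont g Pthin V HV (ex_intro _ w Vw))
      as [W [HW [Wne HWV]]].
    destruct IH with W as [z [Wz Hz]]; [auto with datatypes | exact HW | exact Wne |].
    exists z; split; [exact (proj1 (HWV z Wz))|].
    intros P' g' [Heq | Hin]; [injection Heq as <- <- | now apply Hz].
    exact (proj2 (HWV z Wz)).
Qed.

End Metric.

Section Grid.

Variables (N X : Type) (d : X -> X -> R) (pref : option N -> X -> X -> Prop).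

Lemma generic_on_cons (G : list X) (z : X) :
  generic_on pref G -> (forall i g, In g G -> indiff (pref i) g z -> z = g) ->
  generic_on pref (z :: G).
Proof.
  intros HG Hz i a b [<- | Ha] [<- | Hb] Hab Hba; auto.
  - now apply Hz with i.
  - symmetry; now apply Hz with i.
  - now apply HG with i.
Qed.

Lemma finitely_approximable_thin :
  finitely_approximable d pref -> thin_individual_indifference d pref.
Proof.
  intros FA i x y [U [HU [Uy HUsub]]].
  destruct (HU y Uy) as [r [Hr Hball]].
  destruct (FA x r Hr) as [G [[[M [HMr HG]] Hgen] Hx]].
  destruct (HG y) as [z [Hz Hyz]].
  destruct (HUsub z) as [[Hzx Hxz] Hneq]; [apply Hball; unfold ball; lra|].
  apply Hneq; symmetry; exact (Hgen i x z Hx Hz Hxz Hzx).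
Qed.

Hypothesis N_finite : exists vs : list N, forall v, In v vs.
Hypothesis d_metric : is_metric d.
Hypothesis pref_continuous : forall i, continuous_pref d (pref i).
Hypothesis pref_thin : thin_individual_indifference d pref.

Lemma generic_grid_near (x : X) (r : R) (cs : list X) : 0 < r ->
  exists G, generic_on pref G /\ In x G /\
    forall c, In c cs -> exists g, In g G /\ d c g < r.
Proof.
  intros Hr; destruct N_finite as [vs Hvs].
  set (players := None :: map Some vs).
  assert (Hplayers : forall i, In i players).
  { intros [v |]; [right; now apply in_map | now left]. }
  induction cs as [| c cs IH].
  - exists (x :: nil); repeat split; [| now left | now intros c []].
    intros i a b [<- | []] [<- | []] _ _; reflexivity.
  - destruct IH as [G [HG [Hx Hcs]]].
    destruct (open_exists_avoid_indiff X d d_metric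
                (list_prod (map pref players) G)) with (V := ball d c r)
      as [z [Hcz Hz]].
    + intros P g HPg; apply in_prod_iff in HPg as [HP _].
      apply in_map_iff in HP as [i [<- _]]; split; [apply pref_continuous | apply pref_thin].
    + now apply open_set_ball.
    + exists c; now apply ball_center.
    + exists (z :: G); repeat split; [| now right |].
      * apply generic_on_cons; [exact HG|]; intros i g Hg; apply Hz.
        apply in_prod; [now apply in_map | exact Hg].
      * intros c' [<- | Hc']; [exists z; split; [now left | exact Hcz]|].
        destruct (Hcs c' Hc') as [g [Hg Hdg]]; exists g; split; [now right | exact Hdg].
Qed.

Lemma thin_finitely_approximable :
  compact_space d -> finitely_approximable d pref.
Proof.
  intros Hcomp x eps Heps.
  destruct (compact_finite_net X d d_metric (eps / 2) Hcomp) as [cs Hcs]; [lra|].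
  destruct (generic_grid_near x (eps / 4) cs) as [G [HG [Hx HGcs]]]; [lra|].
  exists G; split; [split; [| exact HG] | exact Hx].
  exists (3 * eps / 4); split; [lra|]; intros y.
  destruct (Hcs y) as [c [Hc Hcy]], (HGcs c Hc) as [g [Hg Hcg]].
  exists g; split; [exact Hg|].
  destruct d_metric as [_ [_ [d_sym d_tri]]].
  pose proof (d_tri y c g); rewrite (d_sym y c) in *; lra.
Qed.

End Grid.

Theorem lemma3 (N : Type) (HN : exists vs : list N, forall v, In v vs)
  (X : Type) (d : X -> X -> R) (pref : option N -> X -> X -> Prop) :
  collective_choice_problem d pref ->
  (finitely_approximable d pref <-> thin_individual_indifference d pref).
Proof.
  intros [Hd [Hcomp Hpref]]; split.
  - apply finitely_approximable_thin.
  - intros Hthin; apply thin_finitely_approximable; auto.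
    intros i; apply Hpref.
Qed.
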